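(* Let $G$ be a maximal outerplanar graph of order $n\geq 3$. Then $\gamma_{\times 2}(G)\leq \lfloor \frac{2n}{3}\rfloor$. *)

(* Simple graphs on a finite vertex type T given by a
   symmetric irreflexive boolean relation e. *)
From mathcomp Require Import all_boot.
Set Implicit Arguments. Unset Strict Implicit. Unset Printing Implicit Defensive.

(* Two chords {a,b} and {c,d} of points placed (in this cyclic order) on a
   circle at positions a,b,c,d : nat cross iff exactly one of c,d lies
   strictly inside the arc between a and b and the other strictly outside. *)
Definition chords_cross (a b c d : nat) : bool :=
  let x := minn a b in let y := maxn a b in
  let inside z := (x < z) && (z < y) in
  let outside z := (z < x) || (y < z) in
  (inside c && outside d) || (inside d && outside c).

(* Outerplanar: the vertices can be placed on a circle (injective
   cyclic ordering f) so that no two edges, drawn as straight chords,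
   cross, i.e. there is a planar drawing with every vertex on the outer face. *)
Definition outerplanar (T : finType) (e : rel T) : Prop :=
  exists f : T -> nat, injective f /\
    forall a b c d : T, e a b -> e c d -> ~~ chords_cross (f a) (f b) (f c) (f d).

Definition add_edge (T : eqType) (e : rel T) (x y : T) : rel T :=
  fun u v => [|| e u v, (u == x) && (v == y) | (u == y) && (v == x)].

Definition maximal_outerplanar (T : finType) (e : rel T) : Prop :=
  outerplanar e /\
  forall x y : T, x != y -> ~~ e x y -> ~ outerplanar (add_edge e x y).

Definition closed_nbhd (T : finType) (e : rel T) (v : T) : {set T} :=
  [set u | (u == v) || e v u].

Definition double_dominating (T : finType) (e : rel T) (S : {set T}) : bool :=
  [forall v, 2 <= #|closed_nbhd e v :&: S|].

(* Double domination number: minimum size of a double dominating set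
   (default #|T| if none exists, which never happens without isolated
   vertices). *)
Definition double_domination_number (T : finType) (e : rel T) : nat :=
  \big[minn/#|T|]_(S : {set T} | double_dominating e S) #|S|.

From mathcomp Require Import all_boot.
From mathcomp Require Import zify.

Set Implicit Arguments. Unset Strict Implicit. Unset Printing Implicit Defensive.

(* Draw the graph with its vertices on a circle.  Maximality means that every
   missing chord is crossed by an edge, so an edge of minimal span passing over
   some vertex passes over exactly one vertex k, which is adjacent to both ends
   of that edge and to nothing else: an ear.  Removing ears one at a time and
   giving each the colour missing on its edge yields a proper 3-colouring in
   which every closed neighbourhood meets all three colours.  The complement of
   the largest colour class has at most 2n/3 vertices, and every closed
   neighbourhood meets it in two vertices of different colours. *)

Lemma chords_crossC a b c d : chords_cross a b c d = chords_cross c d a b.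
Proof. by rewrite /chords_cross; apply/idP/idP; lia. Qed.

Lemma chords_cross_swapl a b c d : chords_cross b a c d = chords_cross a b c d.
Proof. by rewrite /chords_cross; apply/idP/idP; lia. Qed.

Lemma chords_cross_swapr a b c d : chords_cross a b d c = chords_cross a b c d.
Proof. by rewrite chords_crossC chords_cross_swapl chords_crossC. Qed.

Lemma chords_crossP x y a b : x < y -> chords_cross x y a b ->
  (x < a < y /\ (b < x \/ y < b)) \/ (x < b < y /\ (a < x \/ y < a)).
Proof. by rewrite /chords_cross; lia. Qed.

Lemma exists_avoid2 (I : finType) (A : {set I}) (a b : I) :
  2 < #|A| -> exists2 m, m \in A & (m != a) && (m != b).
Proof.
move=> A_gt2; have : 0 < #|A :\: [set a; b]|.
  have := subset_leq_card (subsetIr A [set a; b]).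
  by rewrite cardsD cards2; lia.
by case/card_gt0P=> m; rewrite !inE negb_or => /andP[mab mA]; exists m.
Qed.

Lemma ord3_cover (a b c m : 'I_3) :
  a != b -> a != c -> b != c -> [|| m == a, m == b | m == c].
Proof.
rewrite -!val_eqE; move: (ltn_ord a) (ltn_ord b) (ltn_ord c) (ltn_ord m) => /=.
lia.
Qed.

Definition noncrossing (T : finType) (e : rel T) (f : T -> nat) :=
  forall a b c d, e a b -> e c d -> ~~ chords_cross (f a) (f b) (f c) (f d).

Definition saturated (T : finType) (e : rel T) (f : T -> nat) (P : {set T}) :=
  forall x y, x \in P -> y \in P -> x != y -> ~~ e x y ->
    exists c d, [/\ c \in P, d \in P, e c d & chords_cross (f x) (f y) (f c) (f d)].

Lemma noncrossing_add_edge (T : finType) (e : rel T) (f : T -> nat) x y :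
  noncrossing e f ->
  (forall c d, e c d -> ~~ chords_cross (f x) (f y) (f c) (f d)) ->
  noncrossing (add_edge e x y) f.
Proof.
move=> ncr free a b c d.
case/or3P=> [eab|/andP[/eqP-> /eqP->]|/andP[/eqP-> /eqP->]];
case/or3P=> [ecd|/andP[/eqP-> /eqP->]|/andP[/eqP-> /eqP->]];
by [ exact: ncr | exact: free | rewrite chords_crossC free
   | rewrite chords_cross_swapl free | rewrite chords_crossC chords_cross_swapl free
   | rewrite /chords_cross; lia ].
Qed.

Lemma maximal_outerplanar_saturated (T : finType) (e : rel T) :
  maximal_outerplanar e ->
  exists f, [/\ injective f, noncrossing e f & saturated e f setT].
Proof.
case=> [[f [f_inj ncr]] maxe]; exists f; split=> // x y _ _ xy nexy.
pose crossing := [exists c, exists d, e c d && chords_cross (f x) (f y) (f c) (f d)].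
have [/existsP[c /existsP[d /andP[ecd cr]]]|none] := boolP crossing.
  by exists c, d; rewrite !inE.
case: (maxe x y xy nexy); exists f; split=> //.
apply: noncrossing_add_edge => // c d ecd; apply: contra none => cr.
by apply/existsP; exists c; apply/existsP; exists d; rewrite ecd.
Qed.

Section CircularDrawing.

Variables (T : finType) (e : rel T) (f : T -> nat).
Hypotheses (e_sym : symmetric e) (e_irr : irreflexive e) (f_inj : injective f).
Hypothesis e_noncrossing : noncrossing e f.

Definition ear (P : {set T}) (i j k : T) :=
  [/\ [/\ i \in P, j \in P & k \in P], [/\ e i j, e i k & e k j], f i < f k < f j &
      forall z, z \in P -> f i < f z < f j -> z = k].

Lemma saturated_gap_edge (P : {set T}) x y : saturated e f P -> x \in P -> y \in P ->
  f x < f y -> (forall z, z \in P -> ~~ (f x < f z < f y)) -> e x y.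
Proof.
move=> satP Px Py xy gap; apply: contraT => nexy.
have x_neq_y : x != y by apply: contraTneq xy => ->; rewrite ltnn.
have [c [d [Pc Pd _ /chords_crossP-/(_ xy) cr]]] := satP x y Px Py x_neq_y nexy.
by move: (gap c Pc) (gap d Pd); lia.
Qed.

Lemma exists_spanning_edge (P : {set T}) : 3 <= #|P| -> saturated e f P ->
  exists x y z, [/\ [/\ x \in P, y \in P & z \in P], e x y & f x < f z < f y].
Proof.
move=> P_ge3 satP.
have [p Pp] : exists p, p \in P by apply/card_gt0P; lia.
have [x Px min_x] := arg_minnP f Pp; have [y Py max_y] := arg_maxnP f Pp.
have [z Pz /andP[zx zy]] := exists_avoid2 x y P_ge3.
have xzy : f x < f z < f y.
  move: (min_x z Pz) (max_y z Pz); rewrite -!(inj_eq f_inj) in zx zy; lia.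
exists x, y, z; split=> //; apply: contraT => nexy.
have x_neq_y : x != y by apply: contraTneq xzy => ->; lia.
have [c [d [Pc Pd _]]] := satP x y Px Py x_neq_y nexy.
by move: (min_x c Pc) (min_x d Pd) (max_y c Pc) (max_y d Pd); rewrite /chords_cross; lia.
Qed.

(* Take an edge ij of minimal span [f j - f i] among those passing over a vertex
   of P, and its first inner vertex k.  An edge crossing the chord kj would be
   shorter than ij or cross it, so kj is an edge; hence k is the only inner
   vertex. *)
Lemma exists_ear (P : {set T}) :
  3 <= #|P| -> saturated e f P -> exists i j k, ear P i j k.
Proof.
move=> P_ge3 satP.
pose spans (p : T * T) :=
  [&& p.1 \in P, p.2 \in P, e p.1 p.2 & [exists z in P, f p.1 < f z < f p.2]].
have [x [y [u [[Px Py Pu] exy xuy]]]] := exists_spanning_edge P_ge3 satP.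
have spans_xy : spans (x, y).
  by rewrite /spans Px Py exy; apply/exists_inP; exists u.
have [[i j] /and4P[/= Pi Pj eij /exists_inP[z0 Pz0 iz0j]] min_ij] :=
  arg_minnP (fun p : T * T => f p.2 - f p.1) spans_xy.
pose inner z := (z \in P) && (f i < f z < f j).
have inner_z0 : inner z0 by rewrite /inner Pz0.
have [k /andP[Pk ikj] min_k] := arg_minnP f inner_z0.
have ekj : e k j.
  apply: contraT => nekj.
  have k_neq_j : k != j by apply: contraTneq ikj => ->; rewrite ltnn andbF.
  have kj : f k < f j by case/andP: ikj.
  have [c [d [Pc Pd ecd /chords_crossP-/(_ kj) cr]]] := satP k j Pk Pj k_neq_j nekj.
  wlog [kcj d_out] : c d Pc Pd ecd {cr} / f k < f c < f j /\ (f d < f k \/ f j < f d).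
    move=> wlog; case: cr => -[c_in d_out].
      exact: (wlog c d).
    by apply: (wlog d c); rewrite // e_sym.
  have [d_eq_i | d_neq_i] := eqVneq d i.
    rewrite d_eq_i e_sym in ecd.
    have := min_ij (i, c); rewrite /spans /= Pi Pc ecd /=.
    have -> : [exists z in P, f i < f z < f c].
      by apply/exists_inP; exists k => //; move: ikj kcj; clear; lia.
    by move: ikj kcj; clear; lia.
  have d_out_ij : f d < f i \/ f j < f d.
    move: (min_k d) d_neq_i d_out ikj; rewrite -(inj_eq f_inj) /inner Pd; clear; lia.
  by move: (e_noncrossing eij ecd) ikj kcj d_out_ij; rewrite /chords_cross; clear; lia.
have k_uniq z : z \in P -> f i < f z < f j -> z = k.
  move=> Pz izj; apply/eqP; apply: contraT => z_neq_k.
  rewrite -(inj_eq f_inj) in z_neq_k.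
  have k_z : f k < f z.
    by move: (min_k z); rewrite /inner Pz izj ltn_neqAle eq_sym z_neq_k => ->.
  have := min_ij (k, j); rewrite /spans /= Pk Pj ekj.
  have -> : [exists z in P, f k < f z < f j].
    by apply/exists_inP; exists z => //; rewrite k_z; case/andP: izj.
  by move: ikj k_z; clear; lia.
have eik : e i k.
  apply: saturated_gap_edge satP Pi Pk _ _ => [|w Pw]; first by case/andP: ikj.
  apply/negP => iwk; have w_eq_k : w = k.
    by apply: k_uniq => //; move: iwk ikj; clear; lia.
  by rewrite w_eq_k ltnn andbF in iwk.
by exists i, j, k.
Qed.

Lemma ear_distinct (P : {set T}) i j k : ear P i j k -> [/\ i != j, i != k & j != k].
Proof.
case=> _ _ /andP[ik kj] _.
by split; apply/eqP => eq; move: ik kj; rewrite eq; clear; lia.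
Qed.

Lemma ear_neighbours (P : {set T}) i j k u :
  ear P i j k -> u \in P -> e k u -> u = i \/ u = j.
Proof.
case=> [[Pi Pj Pk] [eij _ _] ikj k_uniq] Pu eku.
have [->|u_neq_i] := eqVneq u i; first by left.
have [->|u_neq_j] := eqVneq u j; first by right.
have u_neq_k : u != k by apply: contraTneq eku => ->; rewrite e_irr.
have u_out : ~~ (f i < f u < f j) by apply: contraNN u_neq_k => /(k_uniq u Pu)->.
rewrite -!(inj_eq f_inj) in u_neq_i u_neq_j.
move: (e_noncrossing eij eku) u_out u_neq_i u_neq_j ikj.
by rewrite /chords_cross; clear; lia.
Qed.

Lemma saturated_ear_removal (P : {set T}) i j k :
  ear P i j k -> saturated e f P -> saturated e f (P :\ k).
Proof.
move=> earP satP x y; rewrite !inE => /andP[x_neq_k Px] /andP[y_neq_k Py] xy nexy.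
have [c [d [Pc Pd ecd cr]]] := satP x y Px Py xy nexy.
case: (earP) => _ _ ikj k_uniq.
have x_out : ~~ (f i < f x < f j) by apply: contraNN x_neq_k => /(k_uniq x Px)->.
have y_out : ~~ (f i < f y < f j) by apply: contraNN y_neq_k => /(k_uniq y Py)->.
have k_free b : b \in P -> e k b -> ~~ chords_cross (f x) (f y) (f k) (f b).
  move=> Pb /(ear_neighbours earP Pb)[]->;
  by move: x_out y_out ikj; rewrite /chords_cross; clear; lia.
have [c_eq_k|c_neq_k] := eqVneq c k.
  by rewrite c_eq_k (negbTE (k_free d Pd _)) -?c_eq_k in cr.
have [d_eq_k|d_neq_k] := eqVneq d k.
  by rewrite d_eq_k chords_cross_swapr (negbTE (k_free c Pc _)) // -d_eq_k e_sym in cr.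
by exists c, d; rewrite !inE c_neq_k d_neq_k Pc Pd.
Qed.

Definition proper_on (P : {set T}) (c : T -> 'I_3) :=
  {in P &, forall u v, e u v -> c u != c v}.

Definition panchromatic (P : {set T}) (c : T -> 'I_3) (v : T) :=
  forall m : 'I_3, exists2 u, u \in closed_nbhd e v :&: P & c u = m.

Lemma panchromatic_triangle (P : {set T}) c u v w : proper_on P c ->
  u \in P -> v \in P -> w \in P -> e u v -> e u w -> e v w -> panchromatic P c u.
Proof.
move=> cP Pu Pv Pw euv euw evw m.
have N_u x : x \in P -> e u x -> x \in closed_nbhd e u :&: P.
  by move=> Px eux; rewrite !inE Px eux orbT.
have: [|| m == c u, m == c v | m == c w] by apply: ord3_cover; apply: cP.
case/or3P=> /eqP->; [exists u | exists v | exists w] => //.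
- by rewrite !inE eqxx Pu.
- exact: N_u.
- exact: N_u.
Qed.

Lemma panchromatic_sub (P Q : {set T}) c c' v : P \subset Q -> {in P, c =1 c'} ->
  panchromatic P c v -> panchromatic Q c' v.
Proof.
move=> PQ cc' panP m; have [u] := panP m; rewrite in_setI => /andP[Nu Pu] <-.
by exists u; rewrite ?in_setI ?Nu ?(subsetP PQ) ?(cc' u Pu).
Qed.

Lemma ear_extend_coloring (P : {set T}) i j k c : ear P i j k ->
  proper_on (P :\ k) c ->
  {in P :\ k, forall v, v != i -> v != j -> panchromatic (P :\ k) c v} ->
  exists c', proper_on P c' /\ {in P, forall v, panchromatic P c' v}.
Proof.
move=> earP cP panP; case: (earP) => [[Pi Pj Pk] [eij eik ekj] ikj _].
have [_ i_neq_k j_neq_k] := ear_distinct earP.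
have P'i : i \in P :\ k by rewrite !inE i_neq_k.
have P'j : j \in P :\ k by rewrite !inE j_neq_k.
have colors3 : 2 < #|[set: 'I_3]| by rewrite cardsT card_ord.
have [m _ /andP[m_ci m_cj]] := exists_avoid2 (c i) (c j) colors3.
pose c' v := if v == k then m else c v.
have c'_out v : v != k -> c' v = c v by rewrite /c' => /negbTE->.
have c'P : proper_on P c'.
  have k_nbr u : u \in P -> e k u -> c' k != c' u.
    move=> Pu /(ear_neighbours earP Pu)[]->;
    by rewrite /c' eqxx ?(negbTE i_neq_k) ?(negbTE j_neq_k).
  move=> u v Pu Pv euv.
  have [u_eq_k | u_neq_k] := eqVneq u k; first by rewrite u_eq_k k_nbr // -u_eq_k.
  have [v_eq_k | v_neq_k] := eqVneq v k.
    by rewrite v_eq_k eq_sym k_nbr // e_sym -v_eq_k.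
  by rewrite !c'_out // cP // !inE ?u_neq_k ?v_neq_k.
exists c'; split=> // v Pv.
have [-> | v_neq_k] := eqVneq v k.
  by apply: panchromatic_triangle c'P Pk Pi Pj _ ekj eij; rewrite e_sym.
have [-> | v_neq_i] := eqVneq v i.
  by apply: panchromatic_triangle c'P Pi Pj Pk eij eik _; rewrite e_sym.
have [-> | v_neq_j] := eqVneq v j.
  by apply: panchromatic_triangle c'P Pj Pi Pk _ _ eik; rewrite e_sym.
apply: panchromatic_sub (subsetDl P [set k]) _ (panP v _ v_neq_i v_neq_j).
  by move=> u; rewrite !inE => /andP[u_neq_k _]; rewrite c'_out.
by rewrite !inE v_neq_k.
Qed.

Lemma saturated_panchromatic_coloring (P : {set T}) :
  3 <= #|P| -> saturated e f P ->
  exists c, proper_on P c /\ {in P, forall v, panchromatic P c v}.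
Proof.
move=> P_ge3; have [n] : exists n, #|P| = n.+3 by exists (#|P| - 3); lia.
elim: n P {P_ge3} => [|n IHn] P P_card satP;
  have /exists_ear/(_ satP)[i [j [k earP]]] : 3 <= #|P| by rewrite P_card.
- have [i_neq_j i_neq_k j_neq_k] := ear_distinct earP.
  case: (earP) => [[Pi Pj Pk] _ _ _].
  have P'_ij : P :\ k = [set i; j].
    apply/esym/eqP; rewrite eqEcard cards2 i_neq_j; apply/andP; split.
      apply/subsetP => v; rewrite !inE => /orP[]/eqP->;
      by rewrite ?i_neq_k ?j_neq_k ?Pi ?Pj.
    by have := cardsD1 k P; rewrite P_card Pk add1n => -[<-].
  apply: (ear_extend_coloring (c := fun v => if v == i then ord0 else ord_max) earP).
    rewrite P'_ij => u v; rewrite !inE => /orP[]/eqP-> /orP[]/eqP->;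
    by rewrite ?e_irr // eqxx (eq_sym j i) (negbTE i_neq_j).
  by move=> v; rewrite P'_ij !inE => /orP[]->.
- have P'_card : #|P :\ k| = n.+3.
    case: earP => [[_ _ Pk] _ _ _].
    by have := cardsD1 k P; rewrite P_card Pk add1n => -[].
  have [c [cP panP]] := IHn _ P'_card (saturated_ear_removal earP satP).
  by apply: (ear_extend_coloring earP cP) => v Pv _ _; apply: panP.
Qed.

End CircularDrawing.

Lemma double_domination_number_le (T : finType) (e : rel T) (S : {set T}) :
  double_dominating e S -> double_domination_number e <= #|S|.
Proof.
move=> ddS; rewrite /double_domination_number; move: (mem_index_enum S).
elim: (index_enum _) => // X r IHr; rewrite inE big_cons => /predU1P[<-|Sr].
  by rewrite ddS geq_minl.
by case: ifP => _; rewrite ?geq_min IHr ?orbT.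
Qed.

Lemma double_dominating_setC_color (T : finType) (e : rel T) (c : T -> 'I_3) m :
  (forall v, panchromatic e setT c v) -> double_dominating e (~: [set v | c v == m]).
Proof.
move=> pan; apply/forallP => v.
have colors3 : 2 < #|[set: 'I_3]| by rewrite cardsT card_ord.
have [k1 _ /andP[k1_m _]] := exists_avoid2 m m colors3.
have [k2 _ /andP[k2_m k2_k1]] := exists_avoid2 m k1 colors3.
have [u1 + cu1] := pan v k1; have [u2 + cu2] := pan v k2; rewrite !setIT => Nu2 Nu1.
apply/card_gt1P; exists u1, u2; rewrite !in_setI Nu1 Nu2 !in_setC !inE cu1 cu2 k1_m k2_m.
by split=> //; apply: contraNneq k2_k1 => u1_eq_u2; rewrite -cu1 -cu2 u1_eq_u2.
Qed.

Lemma large_color_class (T : finType) (c : T -> 'I_3) :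
  exists m, #|T| <= 3 * #|[set v | c v == m]|.
Proof.
pose N m := #|[set v | c v == m]|.
have [m _ max_m] := @arg_maxnP _ ord0 xpredT N isT.
have -> : #|T| = \sum_(k < 3) N k.
  rewrite -[LHS]sum1_card (partition_big c xpredT) //=.
  by apply: eq_bigr => k _; rewrite sum1_card /N; apply: eq_card => v; rewrite !inE.
exists m; apply: (@leq_trans (\sum_(k < 3) N m)).
  by apply: leq_sum => k _; apply: max_m.
by rewrite sum_nat_const card_ord.
Qed.

Theorem corollary3p3 (T : finType) (e : rel T)
  (e_sym : symmetric e) (e_irr : irreflexive e)
  (hn : 3 <= #|T|) (hG : maximal_outerplanar e) :
  double_domination_number e <= (2 * #|T|) %/ 3.
Proof.
have [f [f_inj ncr satT]] := maximal_outerplanar_saturated hG.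
have T_ge3 : 3 <= #|[set: T]| by rewrite cardsT.
have [c [_ pan]] := saturated_panchromatic_coloring e_sym e_irr f_inj ncr T_ge3 satT.
have [m large_m] := large_color_class c.
have ddS := double_dominating_setC_color m (fun v => pan v (in_setT v)).
apply: leq_trans (double_domination_number_le ddS) _.
rewrite leq_divRL //; have := cardsC [set v | c v == m].
by move: large_m; lia.
Qed.
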